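(* Let $N\ge1$, $f:\mathbb{N}^N\to\mathbb{N}$, $p$ a prime, $n$ a nonnegative integer, and let $\boldsymbol{\ell}\in\mathbb{N}^N$ be such that $\boldsymbol{\ell}\neq p\mathbf{m}$ for every $\mathbf{m}\in\mathbb{N}^N$. Define $g:\mathbb{N}^N\to\mathbb{N}$ by $g(\mathbf{x})=\binom{p}{p\mathbf{x}}_f$. Then $$\binom{np}{\boldsymbol{\ell}}_f\equiv n\cdot\sum_{\mathbf{k}}\binom{p}{\mathbf{k}}_f\binom{n-1}{\mathbf{x}_{\mathbf{k}}}_g\pmod{p^2},$$ where the sum runs over all $\mathbf{k}\in S(\boldsymbol{\ell})$ such that not every entry of $\mathbf{k}$ is divisible by $p$ and $\boldsymbol{\ell}-\mathbf{k}=p\mathbf{x}_{\mathbf{k}}$ for some $\mathbf{x}_{\mathbf{k}}\in\mathbb{N}^N$.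
   Context: $\mathbb{N}=\{0,1,2,\dots\}$. $S(\boldsymbol{\ell})=\{\mathbf{s}\in\mathbb{N}^N:\mathbf{s}\neq\mathbf{0},\ 0\le s_j\le\ell_j\ \forall j\}$. For $h:\mathbb{N}^N\to\mathbb{N}$, $k\ge0$ and $\mathbf{x}\in\mathbb{N}^N$, $\binom{k}{\mathbf{x}}_h=\sum_{\mathbf{m}_1+\cdots+\mathbf{m}_k=\mathbf{x}} h(\mathbf{m}_1)\cdots h(\mathbf{m}_k)$ over tuples of vectors in $\mathbb{N}^N$. *)

From mathcomp Require Import all_boot.
Set Implicit Arguments. Unset Strict Implicit. Unset Printing Implicit Defensive.

Definition vecN (N : nat) := 'I_N -> nat.

(* Generalized multinomial coefficient
   binom k x _h = sum over (m_1,...,m_k) in (N^N)^k with m_1+...+m_k = x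
   of h(m_1)...h(m_k).  Every such m_i satisfies m_i <= x <= max_j x_j
   componentwise, so the sum ranges over tuples of vectors with entries
   in 'I_(M.+1), M = max_j x_j; this is the full (finite) sum. *)
Definition gbinom (N : nat) (h : vecN N -> nat) (k : nat) (x : vecN N) : nat :=
  let M := \max_(j < N) x j in
  \sum_(t : {ffun 'I_k -> {ffun 'I_N -> 'I_M.+1}}
          | [forall j : 'I_N, \sum_(i < k) (t i j : nat) == x j])
     \prod_(i < k) h (fun j => (t i j : nat)).

From mathcomp Require Import all_boot fingroup perm action cyclic.
From Stdlib Require Import FunctionalExtensionality.

Set Implicit Arguments. Unset Strict Implicit. Unset Printing Implicit Defensive.

(* On a box [0, L]^N containing l, gbinom h k is the k-th convolution power
   of h, so f^{*np} = (f^{*p})^{*n}.  Split f^{*p} = G + H, with G the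
   restriction of f^{*p} to pN^N.  Rotation of p-tuples has order p and no
   fixed point among the tuples counted by H, so p divides H, whence
   (G + H)^{*n} = G^{*n} + n H * G^{*(n-1)} modulo p^2.  Since G lives on
   pN^N, G^{*n} vanishes at l, and G^{*m} (p x) = g^{*m} (x). *)

Section PrimeOrderPerm.
Variables (T : finType) (s : {perm T}).

Lemma porbit_invariant (A : Type) (F : T -> A) :
  (forall t, F (s t) = F t) -> forall t0 t, t \in porbit s t0 -> F t = F t0.
Proof. by move=> sF t0 t /porbitP[i ->]; rewrite permX; elim: i => //= i <-. Qed.

Variable p : nat.
Hypotheses (p_pr : prime p) (sp1 : (s ^+ p)%g = 1%g).

Lemma card_porbit_prime x : s x != x -> #|porbit s x| = p.
Proof.
move=> sx; have : #|porbit s x| %| p.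
  by rewrite porbitE (dvdn_trans (dvdn_orbit _ _ _)) // -orderE order_dvdn sp1.
case/primeP: p_pr => _ /[apply] /orP[/eqP c1 | /eqP //].
move: c1 (mem_porbit s 1 x); rewrite porbitE => /card_orbit1 ->.
by rewrite expg1 inE (negbTE sx).
Qed.

Lemma dvdn_sum_fixfree (P : pred T) (w : T -> nat) :
  (forall t, P (s t) = P t) -> (forall t, w (s t) = w t) ->
  (forall t, P t -> s t != t) -> p %| \sum_(t | P t) w t.
Proof.
move=> sP sw sfree; rewrite -big_set /= (partition_big_imset (porbit s)) /=.
apply: dvdn_sum => _ /imsetP[t0 Pt0 ->]; rewrite inE in Pt0.
rewrite (eq_bigl (mem (porbit s t0))) => [|t]; last first.
  by rewrite inE eq_porbit_mem andb_idl // => /(porbit_invariant sP) ->.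
rewrite (eq_bigr (fun=> w t0)) => [|t /(porbit_invariant sw)//].
by rewrite sum_nat_const card_porbit_prime ?sfree // dvdn_mulr.
Qed.

End PrimeOrderPerm.

Lemma iter_ordS n k (i : 'I_n) : iter k (@ordS n) i = (i + k) %% n :> nat.
Proof.
elim: k => [|k IH]; first by rewrite addn0 modn_small.
by rewrite iterS /= IH addnS -addn1 modnDml addn1.
Qed.

Section Rotation.
Variables (X : finType) (p : nat).
Local Notation tuple := {ffun 'I_p -> X}.

Definition rot (t : tuple) : tuple := [ffun i => t (ordS i)].

Lemma rotE t i : rot t i = t (ordS i).
Proof. exact: ffunE. Qed.

Lemma rot_inj : injective rot.
Proof.
move=> t u /ffunP tu; apply/ffunP => i.
by have := tu (ord_pred i); rewrite !ffunE ord_predK.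
Qed.

Lemma iter_rot k t : iter k rot t = [ffun i => t (iter k (@ordS p) i)].
Proof. by elim: k => [|k IH]; apply/ffunP => i; rewrite ?iterS ?IH !ffunE ?iterSr. Qed.

Lemma rot_order : (perm rot_inj ^+ p)%g = 1%g.
Proof.
apply/permP => t; rewrite permX perm1 (eq_iter (permE rot_inj)) iter_rot.
apply/ffunP => i; rewrite ffunE; congr (t _); apply: ord_inj.
by rewrite iter_ordS modnDr modn_small.
Qed.

Lemma rot_fixed t (i0 : 'I_p) : i0 = 0 :> nat -> rot t = t -> forall i, t i = t i0.
Proof.
move=> i00 tt i; have -> : i = iter i (@ordS p) i0.
  by apply: ord_inj; rewrite iter_ordS i00 add0n modn_small.
by elim: (nat_of_ord i) => //= k <-; rewrite -{2}tt rotE.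
Qed.

End Rotation.

Section BoundedMultinomial.
Variable N : nat.
Implicit Types (h : vecN N -> nat) (x : vecN N).

Definition gbinomB (B : nat) h k x : nat :=
  \sum_(t : {ffun 'I_k -> {ffun 'I_N -> 'I_B.+1}}
          | [forall j, \sum_(i < k) (t i j : nat) == x j])
     \prod_(i < k) h (fun j => (t i j : nat)).

Lemma gbinomE h k x : gbinom h k x = gbinomB (\max_(j < N) x j) h k x.
Proof. by []. Qed.

Lemma prime_dvdn_gbinom h p x :
  prime p -> ~~ [forall j, p %| x j] -> p %| gbinom h p x.
Proof.
move=> p_pr /forallPn[j0 x_j0]; rewrite gbinomE.
apply: (dvdn_sum_fixfree p_pr (rot_order _ _)).
- move=> t; rewrite permE; apply: eq_forallb => j.
  rewrite [in RHS](reindex_inj (@ordS_inj p)); congr (_ == _).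
  by apply: eq_bigr => i _; rewrite (rotE t i).
- move=> t; rewrite permE [in RHS](reindex_inj (@ordS_inj p)).
  by apply: eq_bigr => i _; rewrite rotE.
move=> t /forallP sum_t; rewrite permE; apply: contra x_j0 => /eqP tt.
pose i0 := Ordinal (prime_gt0 p_pr).
rewrite -(eqP (sum_t j0)) (eq_bigr (fun=> (t i0 j0 : nat))) => [|i _].
  by rewrite sum_nat_const card_ord dvdn_mulr.
by rewrite (rot_fixed (i0 := i0)).
Qed.

Lemma leq_bigsum_ord k (F : 'I_k -> nat) i : F i <= \sum_(i0 < k) F i0.
Proof. by rewrite (bigD1 i) //= leq_addr. Qed.

Lemma gbinomB_widen M B h k x :
  M <= B -> (forall j, x j <= M) -> gbinomB M h k x = gbinomB B h k x.
Proof.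
move=> MB xM; rewrite /gbinomB.
pose widen (t : {ffun 'I_k -> {ffun 'I_N -> 'I_M.+1}}) :=
  [ffun i => [ffun j => widen_ord (MB : M.+1 <= B.+1) (t i j)]].
pose narrow (t : {ffun 'I_k -> {ffun 'I_N -> 'I_B.+1}}) :=
  [ffun i => [ffun j => inord (t i j) : 'I_M.+1]].
symmetry; rewrite (reindex_onto widen narrow) => [|t /forallP sum_t]; last first.
  apply/ffunP => i; apply/ffunP => j; apply: val_inj; rewrite !ffunE /= inordK //.
  rewrite ltnS (leq_trans _ (xM j)) // -(eqP (sum_t j)).
  exact: (leq_bigsum_ord (fun i => t i j : nat)).
apply: eq_big => [t|t _]; last first.
  by apply: eq_bigr => i _; congr h; apply: functional_extensionality => j; rewrite !ffunE.
have -> : narrow (widen t) == t.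
  by apply/eqP/ffunP => i; apply/ffunP => j; apply: val_inj; rewrite !ffunE /= inordK.
by rewrite andbT; apply: eq_forallb => j; under eq_bigr do rewrite !ffunE.
Qed.

Definition ffcons X k (y : X) (t : {ffun 'I_k -> X}) : {ffun 'I_k.+1 -> X} :=
  [ffun i => if unlift ord0 i is Some i' then t i' else y].

Definition ffbehead X k (t : {ffun 'I_k.+1 -> X}) : {ffun 'I_k -> X} :=
  [ffun i => t (lift ord0 i)].

Lemma ffcons0 X k y t : @ffcons X k y t ord0 = y.
Proof. by rewrite ffunE unlift_none. Qed.

Lemma ffconsS X k y t i : @ffcons X k y t (lift ord0 i) = t i.
Proof. by rewrite ffunE liftK. Qed.

Lemma gbinomBS B h k x :
  gbinomB B h k.+1 x =
  \sum_(y : {ffun 'I_N -> 'I_B.+1} | [forall j, (y j : nat) <= x j])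
    h (fun j => (y j : nat)) * gbinomB B h k (fun j => x j - y j).
Proof.
rewrite /gbinomB (partition_big (fun t : {ffun 'I_k.+1 -> _} => t ord0)
  (fun y : {ffun 'I_N -> 'I_B.+1} => [forall j, (y j : nat) <= x j])); last first.
  move=> t /forallP sum_t; apply/forallP => j; rewrite -(eqP (sum_t j)).
  exact: (leq_bigsum_ord (fun i => t i j : nat)).
apply: eq_bigr => y /forallP yx; rewrite big_distrr /=.
rewrite (reindex_onto (ffcons y) (@ffbehead _ k)) => [|t /andP[_ /eqP t0]]; last first.
  by apply/ffunP => i; rewrite ffunE; case: unliftP => [i'|] ->; rewrite ?ffunE.
apply: eq_big => [t|t _]; last first.
  by rewrite big_ord_recl ffcons0; congr (_ * _); apply: eq_bigr => i _; rewrite ffconsS.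
have -> : ffbehead (ffcons y t) == t by apply/eqP/ffunP => i; rewrite ffunE ffconsS.
rewrite ffcons0 eqxx !andbT; apply: eq_forallb => j.
rewrite big_ord_recl ffcons0 (eq_bigr (fun i => t i j : nat)) => [|i _]; last first.
  by rewrite ffconsS.
by rewrite -{1}(subnKC (yx j)) eqn_add2l.
Qed.

End BoundedMultinomial.

Section Convolution.
Variables N L : nat.
Local Notation V := {ffun 'I_N -> 'I_L.+1}.
Implicit Types (a b c : V -> nat) (x y z w : V).

Definition vec x : vecN N := fun j => x j.
Definition lev y x := [forall j, (y j : nat) <= x j].
(* [inord] sends values above L to 0; the E-lemmas below carry the bounds. *)
Definition subv x y : V := [ffun j => inord (x j - y j)].
Definition addv x y : V := [ffun j => inord (x j + y j)].
Definition delta0 x : nat := [forall j, (x j : nat) == 0].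
Definition conv a b x := \sum_(y | lev y x) a y * b (subv x y).

Fixpoint convn a k : V -> nat := if k is k'.+1 then conv a (convn a k') else delta0.

Lemma convnS a k x : convn a k.+1 x = conv a (convn a k) x.
Proof. by []. Qed.

Lemma boxvP x y : (forall j, x j = y j :> nat) -> x = y.
Proof. by move=> xy; apply/ffunP => j; apply: val_inj; exact: xy. Qed.

Lemma leq_boxL x j : x j <= L.
Proof. by rewrite -ltnS. Qed.

Lemma subvE x y j : subv x y j = x j - y j :> nat.
Proof. by rewrite ffunE inordK // ltnS (leq_trans (leq_subr _ _) (leq_boxL _ _)). Qed.

Lemma addvE x y j : x j + y j <= L -> addv x y j = x j + y j :> nat.
Proof. by move=> xyL; rewrite ffunE inordK. Qed.

Lemma levP y x : reflect (forall j, y j <= x j) (lev y x).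
Proof. exact: forallP. Qed.

Lemma lev_subv x y : lev (subv x y) x.
Proof. by apply/levP => j; rewrite subvE leq_subr. Qed.

Lemma lev_trans x y z : lev x y -> lev y z -> lev x z.
Proof. by move=> /levP xy /levP yz; apply/levP => j; exact: leq_trans (xy j) (yz j). Qed.

Lemma subvK x y : lev y x -> subv x (subv x y) = y.
Proof. by move=> /levP yx; apply: boxvP => j; rewrite !subvE subKn. Qed.

Lemma convC a b x : conv a b x = conv b a x.
Proof.
rewrite /conv (reindex_onto (subv x) (subv x)) => [|y]; last exact: subvK.
apply: eq_big => [y|y /andP[_ /eqP yy]]; last by rewrite yy mulnC.
rewrite lev_subv; apply/eqP/idP => [<-|/subvK //]; exact: lev_subv.
Qed.

Lemma conv_delta0r a x : conv a delta0 x = a x.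
Proof.
rewrite /conv (bigD1 x) /=; last by apply/levP.
rewrite big1 => [|y /andP[/levP yx yNx]].
  suff -> : delta0 (subv x x) = 1 by rewrite muln1 addn0.
  by rewrite /delta0 (_ : [forall j, _]) //; apply/forallP => j; rewrite subvE subnn.
rewrite /delta0; case: forallP => [sub0 | _]; last by rewrite muln0.
case/eqP: yNx; apply: boxvP => j; apply/eqP; rewrite eqn_leq yx /=.
by rewrite -subn_eq0 -subvE sub0.
Qed.

Lemma eq_conv_in a a' b b' x :
  (forall y, lev y x -> a y = a' y) -> (forall y, lev y x -> b y = b' y) ->
  conv a b x = conv a' b' x.
Proof. by move=> aa bb; apply: eq_bigr => y yx; rewrite aa // bb ?lev_subv. Qed.

Lemma eq_conv a a' b b' : a =1 a' -> b =1 b' -> conv a b =1 conv a' b'.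
Proof. by move=> aa bb x; apply: eq_conv_in => y _. Qed.

Lemma convA a b c x : conv (conv a b) c x = conv a (conv b c) x.
Proof.
rewrite /conv; under eq_bigr do rewrite big_distrl.
rewrite (exchange_big_dep (fun y => lev y x)) /= => [|w y wx yw]; last first.
  exact: lev_trans yw wx.
apply: eq_bigr => y /levP yx; rewrite big_distrr /=.
rewrite (reindex_onto (addv y) (fun w => subv w y)) => [|w /andP[_ /levP yw]]; last first.
  by apply: boxvP => j; rewrite addvE subvE ?subnKC ?leq_boxL.
have addvK z : lev z (subv x y) -> forall j, addv y z j = y j + z j :> nat.
  move=> /levP zxy j; apply: addvE; rewrite (leq_trans _ (leq_boxL x j)) //.
  by rewrite -leq_subRL ?yx // -subvE zxy.
have addvKl z : lev z (subv x y) -> subv (addv y z) y = z.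
  by move=> zxy; apply: boxvP => j; rewrite subvE addvK // addKn.
have addv_subv z :
    (lev (addv y z) x && lev y (addv y z)) && (subv (addv y z) y == z) = lev z (subv x y).
  apply/idP/idP => [/andP[/andP[/levP yzx _] /eqP zE]|zxy].
    by apply/levP => j; rewrite -zE !subvE leq_sub2r.
  rewrite addvKl // eqxx andbT; apply/andP; split; apply/levP => j; rewrite addvK //.
    by rewrite -leq_subRL ?yx // -subvE; move/levP: zxy.
  exact: leq_addr.
apply: eq_big => [z|z]; first exact: addv_subv.
rewrite addv_subv => zxy; rewrite addvKl // mulnA; congr (_ * c _).
by apply: boxvP => j; rewrite !subvE addvK // subnDA.
Qed.

Lemma convnD a i k x : convn a (i + k) x = conv (convn a i) (convn a k) x.
Proof.
elim: i x => [|i IH] x; first by rewrite convC conv_delta0r.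
by rewrite addSn convnS (eq_conv (frefl a) IH) -convA.
Qed.

Lemma convnM a k m x : convn a (k * m) x = convn (convn a m) k x.
Proof.
elim: k x => [|k IH] x //.
by rewrite mulSn convnD convnS; apply: eq_conv.
Qed.

Lemma eq_convn_in a b k x : (forall y, lev y x -> a y = b y) -> convn a k x = convn b k x.
Proof.
elim: k x => [|k IH] x ab //=; apply: eq_conv_in => // y yx.
by apply: IH => z zy; apply: ab; apply: lev_trans zy yx.
Qed.

Lemma convDl a a' b x : conv (fun y => a y + a' y) b x = conv a b x + conv a' b x.
Proof. by rewrite /conv -big_split; apply: eq_bigr => y _; rewrite mulnDl. Qed.

Lemma convDr a b b' x : conv a (fun y => b y + b' y) x = conv a b x + conv a b' x.
Proof. by rewrite /conv -big_split; apply: eq_bigr => y _; rewrite mulnDr. Qed.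

Lemma convMnr n a b x : conv a (fun y => n * b y) x = n * conv a b x.
Proof. by rewrite /conv big_distrr; apply: eq_bigr => y _ /=; rewrite mulnCA. Qed.

Lemma conv_modr d a b b' x :
  (forall y, b y = b' y %[mod d]) -> conv a b x = conv a b' x %[mod d].
Proof.
move=> bb; rewrite /conv -modn_summ -[in RHS]modn_summ; congr (_ %% d).
by apply: eq_bigr => y _; rewrite -modnMmr bb modnMmr.
Qed.

Lemma dvdn_conv d1 d2 a b x :
  (forall y, d1 %| a y) -> (forall y, d2 %| b y) -> d1 * d2 %| conv a b x.
Proof. by move=> da db; apply: dvdn_sum => y _; apply: dvdn_mul. Qed.

Lemma convn_add_mod d a b n x : (forall y, d %| b y) ->
  convn (fun y => a y + b y) n x = convn a n x + n * conv b (convn a n.-1) x %[mod d ^ 2].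
Proof.
move=> db; case: n => [|n]; first by rewrite /= addn0.
rewrite succnK.
elim: n x => [|n IH] x; first by rewrite /= !conv_delta0r mul1n.
rewrite convnS (conv_modr _ _ IH) convDl 2!convDr !convMnr -!convnS.
have -> : conv a (conv b (convn a n)) x = conv b (convn a n.+1) x.
  by rewrite -convA (eq_conv (convC a b) (frefl _)) convA.
have [q ->] : exists q, conv b (conv b (convn a n)) x = q * d ^ 2.
  apply/dvdnP; rewrite -mulnn; apply: dvdn_conv => // y.
  by rewrite -[d]muln1; apply: dvdn_conv.
by rewrite mulnA addnA addnC modnMDl -addnA -mulSnr.
Qed.

End Convolution.

Lemma gbinomB_convn N L (h : vecN N -> nat) k (x : {ffun 'I_N -> 'I_L.+1}) :
  gbinomB L h k (vec x) = convn (fun y => h (vec y)) k x.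
Proof.
elim: k x => [|k IH] x.
  rewrite /gbinomB /= /delta0 (eq_bigr (fun=> 1)) => [|t _]; last by rewrite big_ord0.
  under eq_bigl do under eq_forallb do rewrite big_ord0 eq_sym.
  case: forallP => _; last by rewrite big_pred0.
  by rewrite sum1_card card_ffun card_ord.
rewrite gbinomBS convnS; apply: eq_bigr => y _; congr (_ * _).
by rewrite -IH; congr gbinomB; apply: functional_extensionality => j; rewrite /vec subvE.
Qed.

Lemma gbinom_convn N L (h : vecN N -> nat) k (x : {ffun 'I_N -> 'I_L.+1}) :
  gbinom h k (vec x) = convn (fun y => h (vec y)) k x.
Proof.
rewrite gbinomE (@gbinomB_widen _ _ L) ?gbinomB_convn //; last first.
  by move=> j; apply: (leq_bigmax_cond (P := xpredT)).
by apply/bigmax_leqP => j _; exact: leq_boxL.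
Qed.

Section Dilation.
Variables N L p : nat.
Local Notation V := {ffun 'I_N -> 'I_L.+1}.
Implicit Types (a c : V -> nat) (x y z w : V).

Definition dvdv x := [forall j, p %| x j].
Definition scale z : V := [ffun j => inord (p * z j)].
Definition divv y : V := [ffun j => inord (y j %/ p)].

Lemma scaleE z j : p * z j <= L -> scale z j = p * z j :> nat.
Proof. by move=> pzL; rewrite ffunE inordK. Qed.

Lemma divvE y j : divv y j = y j %/ p :> nat.
Proof. by rewrite ffunE inordK // ltnS (leq_trans (leq_div _ _) (leq_boxL _ _)). Qed.

Lemma conv_eq0 a c x : (forall y, ~~ dvdv y -> a y = 0) ->
  (forall y, ~~ dvdv y -> c y = 0) -> ~~ dvdv x -> conv a c x = 0.
Proof.
move=> a0 c0 /forallPn[j pxj]; apply: big1 => y /levP yx.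
have [/forallP py | /a0 -> //] := boolP (dvdv y).
rewrite c0 ?muln0 //; apply: contra pxj => /forallP pxy.
by have := pxy j; rewrite subvE -(dvdn_addl _ (py j)) subnK.
Qed.

Lemma convn_eq0 a k x : (forall y, ~~ dvdv y -> a y = 0) -> ~~ dvdv x -> convn a k x = 0.
Proof.
move=> a0; elim: k x => [|k IH] x px; last exact: conv_eq0.
apply/eqP; rewrite /= /delta0 eqb0; apply: contra px => /forallP x0.
by apply/forallP => j; rewrite (eqP (x0 j)) dvdn0.
Qed.

Hypothesis p_gt0 : 0 < p.

Lemma conv_scale a c z : (forall y, ~~ dvdv y -> a y = 0) -> (forall j, p * z j <= L) ->
  conv a c (scale z) = conv (fun w => a (scale w)) (fun w => c (scale w)) z.
Proof.
move=> a0 pzL.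
have pwL w : lev w z -> forall j, p * w j <= L.
  by move=> /levP wz j; rewrite (leq_trans _ (pzL j)) // leq_pmul2l.
rewrite /conv (bigID dvdv) /= [X in _ + X]big1 ?addn0; last by move=> y /andP[_ /a0 ->].
rewrite (reindex_onto scale divv) => [|y /andP[_ /forallP py]]; last first.
  have pdivv j : p * divv y j = y j by rewrite divvE mulnC divnK.
  by apply: boxvP => j; rewrite scaleE (pdivv j) ?leq_boxL.
have pred_scale w :
    (lev (scale w) (scale z) && dvdv (scale w)) && (divv (scale w) == w) = lev w z.
  apply/idP/idP => [/andP[/andP[/levP wz _] /eqP dw]|wz].
    have pwL' j : p * w j <= L.
      by rewrite -{1}dw divvE mulnC (leq_trans (leq_trunc_div _ _)) ?leq_boxL.
    apply/levP => j; rewrite -(leq_pmul2l p_gt0).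
    by rewrite -(scaleE (pzL j)) -(scaleE (pwL' j)).
  have {}pwL := pwL _ wz; rewrite -andbA; apply/and3P; split.
  - apply/levP => j; rewrite (scaleE (pwL j)) (scaleE (pzL j)) leq_pmul2l //.
    by move/levP: wz.
  - by apply/forallP => j; rewrite (scaleE (pwL j)) dvdn_mulr.
  - by apply/eqP/boxvP => j; rewrite divvE (scaleE (pwL j)) mulKn.
apply: eq_big => [w|w]; first exact: pred_scale.
rewrite pred_scale => wz; congr (_ * c _).
have pzwL j : p * subv z w j <= L.
  by rewrite subvE mulnBr (leq_trans (leq_subr _ _) (pzL j)).
apply: boxvP => j; rewrite subvE (scaleE (pzwL j)) (scaleE (pzL j)).
by rewrite (scaleE (pwL _ wz j)) subvE mulnBr.
Qed.

Lemma convn_scale a k z : (forall y, ~~ dvdv y -> a y = 0) -> (forall j, p * z j <= L) ->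
  convn a k (scale z) = convn (fun w => a (scale w)) k z.
Proof.
move=> a0; elim: k z => [|k IH] z pzL.
  rewrite /= /delta0; congr nat_of_bool; apply: eq_forallb => j.
  by rewrite scaleE // muln_eq0 eqn0Ngt p_gt0.
rewrite convnS conv_scale //; apply: eq_conv_in => // w /levP wz; apply: IH => j.
by rewrite (leq_trans _ (pzL j)) // leq_pmul2l.
Qed.

End Dilation.

Section PrimeReduction.
Variables (N L p : nat) (f : vecN N -> nat).
Hypothesis p_pr : prime p.
Local Notation V := {ffun 'I_N -> 'I_L.+1}.
Local Notation F := (fun y : V => f (vec y)).
Local Notation g := (fun x : vecN N => gbinom f p (fun j => p * x j)).

Definition Gpart (y : V) := if dvdv p y then convn F p y else 0.
Definition Hpart (y : V) := if dvdv p y then 0 else convn F p y.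

Lemma convn_F_split y : convn F p y = Gpart y + Hpart y.
Proof. by rewrite /Gpart /Hpart; case: ifP; rewrite ?addn0. Qed.

Lemma Gpart_eq0 y : ~~ dvdv p y -> Gpart y = 0.
Proof. by rewrite /Gpart => /negbTE ->. Qed.

Lemma dvdn_Hpart y : p %| Hpart y.
Proof.
by rewrite /Hpart; case: ifPn => // py; rewrite -gbinom_convn prime_dvdn_gbinom.
Qed.

Lemma convn_F_mod n (x : V) :
  convn F (n * p) x = convn Gpart n x + n * conv Hpart (convn Gpart n.-1) x %[mod p ^ 2].
Proof.
rewrite convnM (eq_convn_in _ (fun y _ => convn_F_split y)).
exact: convn_add_mod dvdn_Hpart.
Qed.

Lemma convn_Gpart_scale m (z : V) : (forall j, p * z j <= L) ->
  convn Gpart m (scale p z) = gbinom g m (vec z).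
Proof.
move=> pzL; rewrite convn_scale ?prime_gt0 //; last exact: Gpart_eq0.
rewrite gbinom_convn; apply: eq_convn_in => w /levP wz.
have pwL j : p * w j <= L by rewrite (leq_trans _ (pzL j)) // leq_pmul2l ?prime_gt0.
rewrite /Gpart ifT; last by apply/forallP => j; rewrite (scaleE (pwL j)) dvdn_mulr.
rewrite -gbinom_convn; congr gbinom; apply: functional_extensionality => j.
exact: scaleE.
Qed.

Lemma conv_Hpart_convn_Gpart m (x : V) :
  conv Hpart (convn Gpart m) x =
  \sum_(k : V | [&& lev k x, ~~ dvdv p k & [forall j, p %| x j - k j]])
     gbinom f p (vec k) * gbinom g m (fun j => (x j - k j) %/ p).
Proof.
rewrite /conv big_mkcond [RHS]big_mkcond; apply: eq_bigr => k _.
case: (boolP (lev k x)) => kx //=; rewrite /Hpart.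
case: (boolP (dvdv p k)) => pk //=; rewrite -gbinom_convn.
case: forallP => pxk; last first.
  rewrite (convn_eq0 _ (@Gpart_eq0)) ?muln0 //.
  by apply: contra_notN pxk => /forallP pxk j; rewrite -subvE.
have pzL j : p * divv p (subv x k) j <= L.
  by rewrite divvE subvE mulnC divnK // (leq_trans (leq_subr _ _) (leq_boxL _ _)).
have -> : subv x k = scale p (divv p (subv x k)).
  by apply: boxvP => j; rewrite (scaleE (pzL j)) divvE subvE mulnC divnK.
rewrite convn_Gpart_scale //; congr (_ * gbinom _ _ _).
by apply: functional_extensionality => j; rewrite /vec divvE subvE.
Qed.

End PrimeReduction.

Theorem theorem10 (N : nat) (hN : 1 <= N) (f : vecN N -> nat) (p : nat)
  (hp : prime p) (n : nat) (l : vecN N)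
  (hl : forall m : vecN N, ~ (forall j : 'I_N, l j = p * m j)) :
  let g : vecN N -> nat := fun x => gbinom f p (fun j => p * x j) in
  let L := \max_(j < N) l j in
  gbinom f (n * p) l =
  n * \sum_(k : {ffun 'I_N -> 'I_L.+1}
             | [&& [forall j : 'I_N, (k j : nat) <= l j],
                   [exists j : 'I_N, (k j : nat) != 0],
                   ~~ [forall j : 'I_N, p %| k j] &
                   [forall j : 'I_N, p %| l j - k j]])
        gbinom f p (fun j => (k j : nat))
        * gbinom g (n - 1) (fun j => (l j - k j) %/ p)
  %[mod p ^ 2].
Proof.
move=> g L.
pose lV : {ffun 'I_N -> 'I_L.+1} := [ffun j => inord (l j)].
have lVE : vec lV = l.
  apply: functional_extensionality => j; rewrite /vec ffunE inordK // ltnS.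
  exact: (leq_bigmax_cond (P := xpredT)).
have lV_ndvd : ~~ dvdv p lV.
  apply/negP => /forallP pl; apply: (hl (fun j => l j %/ p)) => j.
  by rewrite -lVE mulnC (divnK (pl j)).
rewrite -lVE gbinom_convn (convn_F_mod _ hp) (convn_eq0 _ (@Gpart_eq0 _ _ _ _)) //.
rewrite add0n subn1 conv_Hpart_convn_Gpart //; congr (_ * _ %% _).
apply: eq_bigl => k; congr andb; rewrite /dvdv.
case: (boolP [forall j, p %| k j]) => [_|/forallPn[j pkj]] /=; first by rewrite andbF.
suff -> : [exists j, k j != 0 :> nat] by [].
by apply/existsP; exists j; apply: contraNneq pkj => ->.
Qed.
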